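(* The set $\mathcal N$ is exactly the set of all words over $A$ of the form $x^{i_n}y^{\epsilon_n}\cdots x^{i_1}y^{\epsilon_1}x^{i_0}$ such that $n\ge 0$, each $\epsilon_j\in\{\pm1\}$, each $i_j\in\mathbb Z$, and for every $j\in\{1,\dots,n-1\}$: (1) if $i_j=0$ then $\epsilon_j=\epsilon_{j+1}$; (2) if $\epsilon_j=1$ then $i_j\le 0$; (3) if $\epsilon_j=-1$ then $i_j\le 1$.
   Context: Let $A=\{x^{\pm1},y^{\pm1}\}$ (generators of Thompson's group $F$, $x=x_0$, $y=x_1$). Guba and Sapir's rewriting system $\Sigma$ consists of the rules $aa^{-1}\to\emptyset$ for $a\in A$, $y^\epsilon x^iy\to x^iyx^{-i-1}y^\epsilon x^{i+1}$ and $y^\epsilon x^{i+1}y^{-1}\to x^{i+1}y^{-1}x^{-i}y^\epsilon x^i$ for $\epsilon\in\{1,-1\}$, $i\ge1$. $\mathcal N$ is the set of words over $A$ irreducible with respect to $\Sigma$, i.e. words containing no subword $aa^{-1}$, $y^\epsilon x^iy$, or $y^\epsilon x^{i+1}y^{-1}$ ($\epsilon=\pm1$, $i\ge1$). *)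

From mathcomp Require Import all_boot all_order all_algebra.
Set Implicit Arguments. Unset Strict Implicit. Unset Printing Implicit Defensive.
Import Order.TTheory GRing.Theory Num.Theory.

(* Letters of A = {x, x^-1, y, y^-1}; x = x_0, y = x_1. *)
Inductive letter := X | Xi | Y | Yi.
Definition word := seq letter.

Definition inv_letter (a : letter) : letter :=
  match a with X => Xi | Xi => X | Y => Yi | Yi => Y end.

Definition xpow (i : int) : word :=
  match i with Posz n => nseq n X | Negz n => nseq n.+1 Xi end.

(* y^eps, with eps = true meaning eps = 1 and eps = false meaning eps = -1 *)
Definition ypow (e : bool) : word := if e then [:: Y] else [:: Yi].

(* The rewriting system Sigma of Guba and Sapir: rule l r means l -> r. *)
Inductive rule : word -> word -> Prop :=
  | rule_free (a : letter) : rule [:: a; inv_letter a] [::]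
  | rule_pos (e : bool) (i : nat) : (1 <= i)%N ->
      rule (ypow e ++ xpow (Posz i) ++ [:: Y])
           (xpow (Posz i) ++ [:: Y] ++ xpow (- (Posz i.+1))%R ++ ypow e
              ++ xpow (Posz i.+1))
  | rule_neg (e : bool) (i : nat) : (1 <= i)%N ->
      rule (ypow e ++ xpow (Posz i.+1) ++ [:: Yi])
           (xpow (Posz i.+1) ++ [:: Yi] ++ xpow (- (Posz i))%R ++ ypow e
              ++ xpow (Posz i)).

Definition irreducible (w : word) : Prop :=
  ~ exists (u v l r : word), rule l r /\ w = u ++ l ++ v.

Definition N_set (w : word) : Prop := irreducible w.

Fixpoint nf_word (n : nat) (ep : nat -> bool) (ex : nat -> int) : word :=
  match n with
  | 0 => xpow (ex 0%N)
  | k.+1 => xpow (ex k.+1) ++ ypow (ep k.+1) ++ nf_word k ep ex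
  end.

From mathcomp Require Import all_boot all_order all_algebra.
From HB Require Import structures.

Set Implicit Arguments.
Unset Strict Implicit.
Unset Printing Implicit Defensive.
Import Order.TTheory GRing.Theory Num.Theory.
Local Open Scope ring_scope.

(* Irreducibility can be tested from the left: a w is irreducible iff w is and
   a w does not begin with a left-hand side of Sigma.  Prepending x^{+-1} to a
   normal form only changes its leading exponent, unless it cancels against it;
   prepending y^e opens a new block, and the only left-hand sides that can then
   begin the word have the form y^e x^{i_n} y^{e_n}; conditions (1)-(3) say
   exactly that no such left-hand side occurs. *)

Definition letter_comparable : comparable letter.
Proof. rewrite /comparable /decidable; decide equality. Defined.
HB.instance Definition _ := comparableMixin letter_comparable.

Definition yletter (e : bool) : letter := if e then Y else Yi.

Lemma ypowE e : ypow e = [:: yletter e].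
Proof. by case: e. Qed.

Lemma eq_nseqX_yletter m m' e e' s t :
  nseq m X ++ yletter e :: s = nseq m' X ++ yletter e' :: t -> m = m' /\ e = e'.
Proof.
elim: m m' => [|m IHm] [|m'] /=.
- by case: e e' => [] [] [].
- by case: e.
- by case: e' {IHm}.
- by case=> /IHm [-> ->].
Qed.

Lemma yletter_notin_xpow e i : (yletter e \in xpow i) = false.
Proof. by case: e; case: i => m; rewrite mem_nseq andbF. Qed.

Lemma xpowD1 i : 0 <= i -> xpow (i + 1) = X :: xpow i.
Proof. by case: i => // m _; rewrite -PoszD addn1. Qed.

Lemma xpowB1 i : i <= 0 -> xpow (i - 1) = Xi :: xpow i.
Proof.
case: i => [[|m]|m] // _.
by have -> : Negz m - 1 = Negz m.+1 by rewrite !NegzE -opprD -PoszD addn1.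
Qed.

Definition prefix_redex (s : word) : Prop := exists l r v, rule l r /\ s = l ++ v.

Lemma irreducible_nil : irreducible [::].
Proof. by case=> [[|? ?] [? [l [r [[a|e i _|e i _] //]]]]]; case: e. Qed.

Lemma irreducible_cons a w :
  irreducible (a :: w) <-> ~ prefix_redex (a :: w) /\ irreducible w.
Proof.
split=> [irr_aw | [no_redex irr_w] [[|b u] [v [l [r [lr E]]]]]].
- split=> [[l [r [v [lr E]]]] | [u [v [l [r [lr E]]]]]]; apply: irr_aw.
    by exists [::], v, l, r.
  by exists (a :: u), v, l, r; rewrite E.
- by apply: no_redex; exists l, r, v.
- by case: E => _ E; apply: irr_w; exists u, v, l, r.
Qed.

Lemma irreducible_ypow_cat e s :
  irreducible (ypow e ++ s) <-> ~ prefix_redex (ypow e ++ s) /\ irreducible s.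
Proof. by rewrite ypowE; exact: irreducible_cons. Qed.

Lemma prefix_redex_rule l r t : rule l r -> prefix_redex (l ++ t).
Proof. by move=> lr; exists l, r, t. Qed.

Lemma prefix_redex_inv a t : prefix_redex (a :: inv_letter a :: t).
Proof. by exists [:: a; inv_letter a], [::], t; split; first exact: rule_free. Qed.

Lemma prefix_redex_x a s : (a = X \/ a = Xi) -> prefix_redex (a :: s) ->
  exists t, s = inv_letter a :: t.
Proof.
move=> a_x [l [r [v [[b|e i _|e i _] /= E]]]].
- by case: E => -> ->; exists v.
- by case: e E; case: a_x => ->.
- by case: e E; case: a_x => ->.
Qed.

Lemma prefix_redex_yx e i : ~ prefix_redex (ypow e ++ xpow i).
Proof.
case=> l [r [v [[b|e' m _|e' m _]]]]; rewrite !ypowE -?catA /=.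
- case=> <- E; move: (yletter_notin_xpow (~~ e) i); rewrite E inE.
  by case: e {E}.
- case=> _ E; move: (yletter_notin_xpow true i).
  by rewrite E !(inE, mem_cat) eqxx !orbT.
- case=> _ E; move: (yletter_notin_xpow false i).
  by rewrite E !(inE, mem_cat) eqxx !orbT.
Qed.

Definition admissible (e : bool) (i : int) (e' : bool) : Prop :=
  [/\ i = 0 -> e' = e, e' = true -> i <= 0 & e' = false -> i <= 1].

Lemma not_prefix_redex_yxy e i e' t :
  ~ prefix_redex (ypow e ++ xpow i ++ ypow e' ++ t) <-> admissible e i e'.
Proof.
split=> [no_redex | [adm0 adm_pos adm_neg] [l [r [v [lr E]]]]].
- case: e' no_redex => no_redex.
  + case: i no_redex => [[|m]|m] no_redex; try by split.
    * case: e no_redex => no_redex; first by split.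
      by case: no_redex; exact: (prefix_redex_inv Yi).
    * case: no_redex; rewrite (catA (xpow _)) catA.
      exact: prefix_redex_rule (rule_pos e _).
  + case: i no_redex => [[|[|m]]|m] no_redex; try by split.
    * case: e no_redex => no_redex; last by split.
      by case: no_redex; exact: (prefix_redex_inv Y).
    * case: no_redex; rewrite (catA (xpow _)) catA.
      exact: prefix_redex_rule (rule_neg e _).
- case: lr E => [b|e0 m m_gt0|e0 m m_gt0]; rewrite !ypowE -?catA /=.
  + case=> <-; case: i adm0 {adm_pos adm_neg} => [[|m]|m] adm0 /=.
    * by case: e adm0 => /(_ erefl) ->.
    * by case: e adm0.
    * by case: e adm0.
  + case=> _; case: i adm_pos {adm0 adm_neg} => [m'|m'] adm_pos /=; last by case: m m_gt0.
    move/(@eq_nseqX_yletter m' m e' true) => [m'_eq /adm_pos].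
    by rewrite m'_eq lez_nat leqNgt m_gt0.
  + case=> _; case: i adm_neg {adm0 adm_pos} => [m'|m'] adm_neg //=.
    move/(@eq_nseqX_yletter m' m.+1 e' false) => [m'_eq /adm_neg].
    by rewrite m'_eq lez_nat ltnS leqNgt m_gt0.
Qed.

Lemma irreducible_nseq_cat a k s : (a = X \/ a = Xi) -> irreducible s ->
  (forall t, s <> inv_letter a :: t) -> irreducible (nseq k a ++ s).
Proof.
move=> a_x irr_s s_head; elim: k => [|k IHk] //=.
apply/irreducible_cons; split=> // /(prefix_redex_x a_x) [t].
case: k {IHk} => [|k] /= E; first exact: (s_head t).
by case: E; case: a_x => ->.
Qed.

Lemma irreducible_xpow_cat i s : irreducible s ->
  (forall t, s <> X :: t) -> (forall t, s <> Xi :: t) -> irreducible (xpow i ++ s).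
Proof.
move=> irr_s sX sXi; case: i => m; apply: irreducible_nseq_cat => //.
  by left.
by right.
Qed.

Definition set_at (T : Type) (k : nat) (v : T) (f : nat -> T) (j : nat) : T :=
  if j == k then v else f j.

Lemma set_at_id (T : Type) k (v : T) f : set_at k v f k = v.
Proof. by rewrite /set_at eqxx. Qed.

Lemma set_at_lt (T : Type) k (v : T) f j : (j < k)%N -> set_at k v f j = f j.
Proof. by move=> j_lt_k; rewrite /set_at ltn_eqF. Qed.

Lemma eq_nf_word n ep ep' ex ex' :
  (forall j, (j <= n)%N -> ep j = ep' j) -> (forall j, (j <= n)%N -> ex j = ex' j) ->
  nf_word n ep ex = nf_word n ep' ex'.
Proof.
elim: n => [|n IHn] ep_eq ex_eq /=; first by rewrite ex_eq.
rewrite ep_eq // ex_eq // IHn // => j j_le_n; [apply: ep_eq | apply: ex_eq]; exact: leqW.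
Qed.

Definition nf_tail n ep ex : word :=
  if n is k.+1 then ypow (ep n) ++ nf_word k ep ex else [::].

Lemma nf_wordE n ep ex : nf_word n ep ex = xpow (ex n) ++ nf_tail n ep ex.
Proof. by case: n => [|n] //=; rewrite cats0. Qed.

Lemma nf_word_set_at n ep ex i :
  nf_word n ep (set_at n i ex) = xpow i ++ nf_tail n ep ex.
Proof.
rewrite nf_wordE set_at_id; case: n => [|n] //=.
by rewrite (@eq_nf_word n ep ep _ ex) // => j j_le_n; rewrite set_at_lt.
Qed.

Lemma nf_word_push n ep ex e :
  nf_word n.+1 (set_at n.+1 e ep) (set_at n.+1 0 ex) = ypow e ++ nf_word n ep ex.
Proof.
rewrite /= !set_at_id.
by rewrite (@eq_nf_word n _ ep _ ex) // => j j_le_n; rewrite set_at_lt.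
Qed.

Definition nf_admissible n ep ex : Prop :=
  forall j, (0 < j)%N -> (j < n)%N -> admissible (ep j.+1) (ex j) (ep j).

Definition is_nf (w : word) : Prop :=
  exists n ep ex, w = nf_word n ep ex /\ nf_admissible n ep ex.

Lemma nf_admissible_set_at n ep ex i :
  nf_admissible n ep ex -> nf_admissible n ep (set_at n i ex).
Proof. by move=> adm j j_gt0 j_lt_n; rewrite set_at_lt //; exact: adm. Qed.

Lemma nf_admissible_push n ep ex e :
  nf_admissible n ep ex -> ((0 < n)%N -> admissible e (ex n) (ep n)) ->
  nf_admissible n.+1 (set_at n.+1 e ep) (set_at n.+1 0 ex).
Proof.
move=> adm adm_n j j_gt0; rewrite ltnS leq_eqVlt => /predU1P [j_n | j_lt_n].
  by move: j_gt0; rewrite j_n set_at_id !set_at_lt //; exact: adm_n.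
have j_lt_Sn : (j < n.+1)%N by exact: ltnW.
by rewrite !set_at_lt //; exact: adm.
Qed.

Lemma nf_word_irreducible n ep ex :
  nf_admissible n ep ex -> irreducible (nf_word n ep ex).
Proof.
elim: n => [|n IHn] adm.
  by rewrite /= -[xpow _]cats0; apply: irreducible_xpow_cat irreducible_nil _ _.
apply: irreducible_xpow_cat; [|by rewrite ypowE; case: (ep n.+1)..].
apply/irreducible_ypow_cat; split; last by apply: IHn => j j_gt0 /ltnW; exact: adm.
case: n {IHn} adm => [|n] adm; first exact: prefix_redex_yx.
by apply/not_prefix_redex_yxy; exact: adm.
Qed.

Lemma nf_word_consX n ep ex : ~ prefix_redex (X :: nf_word n ep ex) ->
  X :: nf_word n ep ex = nf_word n ep (set_at n (ex n + 1) ex).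
Proof.
rewrite nf_word_set_at nf_wordE; case: (ltrP (ex n) 0) => [ex_neg | /xpowD1 -> //].
by rewrite -[ex n](addrK 1) xpowB1 ?lezD1 // => /(_ (prefix_redex_inv X _)).
Qed.

Lemma nf_word_consXi n ep ex : ~ prefix_redex (Xi :: nf_word n ep ex) ->
  Xi :: nf_word n ep ex = nf_word n ep (set_at n (ex n - 1) ex).
Proof.
rewrite nf_word_set_at nf_wordE; case: (lerP (ex n) 0) => [/xpowB1 -> // | ex_pos].
rewrite -[ex n](subrK 1) xpowD1 ?subr_ge0 -?gtz0_ge1 //.
by move=> /(_ (prefix_redex_inv Xi _)).
Qed.

Lemma admissible_nf_head e n ep ex : ~ prefix_redex (ypow e ++ nf_word n ep ex) ->
  (0 < n)%N -> admissible e (ex n) (ep n).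
Proof. by case: n => // n /not_prefix_redex_yxy. Qed.

Lemma is_nf_ypow_cat e n ep ex : nf_admissible n ep ex ->
  ~ prefix_redex (ypow e ++ nf_word n ep ex) -> is_nf (ypow e ++ nf_word n ep ex).
Proof.
move=> adm no_redex; exists n.+1, (set_at n.+1 e ep), (set_at n.+1 0 ex).
rewrite nf_word_push; split=> //.
exact: nf_admissible_push adm (admissible_nf_head no_redex).
Qed.

Lemma is_nf_cons a w : is_nf w -> ~ prefix_redex (a :: w) -> is_nf (a :: w).
Proof.
move=> [n [ep [ex [-> adm]]]]; case: a => no_redex.
- exists n, ep, (set_at n (ex n + 1) ex).
  by split; [exact: nf_word_consX | exact: nf_admissible_set_at].
- exists n, ep, (set_at n (ex n - 1) ex).
  by split; [exact: nf_word_consXi | exact: nf_admissible_set_at].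
- exact: (@is_nf_ypow_cat true).
- exact: (@is_nf_ypow_cat false).
Qed.

Lemma irreducible_is_nf w : irreducible w -> is_nf w.
Proof.
elim: w => [|a w IHw]; first by exists 0%N, (fun=> true), (fun=> 0).
by move=> /irreducible_cons [no_redex /IHw nf_w]; exact: is_nf_cons.
Qed.

Theorem lemma2p2 (w : word) :
  N_set w <->
  exists (n : nat) (ep : nat -> bool) (ex : nat -> int),
    w = nf_word n ep ex /\
    (forall j : nat, (0 < j)%N -> (j < n)%N ->
       [/\ ex j = 0 -> ep j = ep j.+1,
           ep j = true -> ex j <= 0
         & ep j = false -> ex j <= 1]).
Proof.
split; first exact: irreducible_is_nf.
by move=> [n [ep [ex [-> adm]]]]; exact: nf_word_irreducible.
Qed.
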